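(* Let $S$ be a subspace of $\mathcal{A}\otimes\mathcal{B}$ (finite-dimensional). If there is a PPT-definite operator $\sigma$ with $\operatorname{supp}(\sigma)\subseteq S$, then $S$ is strongly PPT-unextendible.
   Context: A bipartite positive semidefinite operator $E\in\mathcal{L}(\mathcal{A}\otimes\mathcal{B})$ is PPT if its partial transpose $E^{T_B}$ (defined by $(|i\rangle\langle k|\otimes|j\rangle\langle l|)^{T_B}=|i\rangle\langle k|\otimes|l\rangle\langle j|$) is positive semidefinite, and PPT-definite if $E\ge 0$ and $E^{T_B}$ is positive definite. A subspace $S\subseteq\mathcal{A}\otimes\mathcal{B}$ is PPT-extendible if there exists a nonzero PPT operator whose support is contained in the orthogonal complement $S^\perp$; $S$ is strongly PPT-unextendible if for every positive integer $k$, $S^{\otimes k}\subseteq\mathcal{A}^{\otimes k}\otimes\mathcal{B}^{\otimes k}$ is not PPT-extendible (with respect to the bipartition $\mathcal{A}^{\otimes k}:\mathcal{B}^{\otimes k}$). *)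

From HB Require Import structures.
From mathcomp Require Import all_boot all_order all_algebra.
Set Implicit Arguments. Unset Strict Implicit. Unset Printing Implicit Defensive.
Import Order.TTheory GRing.Theory Num.Theory.
Local Open Scope ring_scope.

(* vectors of A (x) B, with A = C^I and B = C^J; index (i,j) is |i>|j> *)
Notation vec C I J := {ffun (I * J)%type -> C}.
(* operators on A (x) B, given by matrix entries E((i,j),(k,l)) = <i,j|E|k,l> *)
Notation op C I J := {ffun ((I * J) * (I * J))%type -> C}.

Section Defs.
Variable C : numClosedFieldType.

Variables I J : finType.

Definition scalv (a : C) (v : vec C I J) : vec C I J := [ffun x => a * v x].

Definition inner (u v : vec C I J) : C := \sum_x (u x)^* * v x.

Definition apply (E : op C I J) (v : vec C I J) : vec C I J :=
  [ffun x => \sum_y E (x, y) * v y].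

Definition psd (E : op C I J) : Prop := forall v : vec C I J, 0 <= inner v (apply E v).
Definition pd (E : op C I J) : Prop :=
  forall v : vec C I J, v != 0 -> 0 < inner v (apply E v).

(* partial transpose on B:
   (|i><k| (x) |j><l|)^{T_B} = |i><k| (x) |l><j| *)
Definition ptrans (E : op C I J) : op C I J :=
  [ffun p => E (((p.1).1, (p.2).2), ((p.2).1, (p.1).2))].

Definition PPT (E : op C I J) : Prop := psd E /\ psd (ptrans E).
Definition PPT_definite (E : op C I J) : Prop := psd E /\ pd (ptrans E).

Definition is_subspace (S : vec C I J -> Prop) : Prop :=
  [/\ S 0, (forall u v, S u -> S v -> S (u + v)) & (forall (a : C) v, S v -> S (scalv a v))].

(* support (= range) of an operator *)
Definition supp (E : op C I J) : vec C I J -> Prop :=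
  fun w => exists v, w = apply E v.

Definition orth (S : vec C I J -> Prop) : vec C I J -> Prop :=
  fun w => forall s, S s -> inner s w = 0.

Definition span (G : vec C I J -> Prop) : vec C I J -> Prop :=
  fun w => exists s : seq (C * vec C I J),
      (forall p, p \in s -> G p.2) /\ w = \sum_(p <- s) scalv p.1 p.2.

Definition PPT_extendible (S : vec C I J -> Prop) : Prop :=
  exists E : op C I J, E != 0 /\ PPT E /\ (forall w, supp E w -> orth S w).

End Defs.

(* k-fold tensor power: (A (x) B)^{(x) k} is identified with
   A^{(x) k} (x) B^{(x) k}, basis vectors indexed by pairs (a, b) with
   a : 'I_k -> I, b : 'I_k -> J. *)
Definition tens (C : numClosedFieldType) (I J : finType) (k : nat)
  (vs : 'I_k -> vec C I J) : vec C {ffun 'I_k -> I} {ffun 'I_k -> J} :=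
  [ffun p : ({ffun 'I_k -> I} * {ffun 'I_k -> J})%type =>
     \prod_(t < k) vs t (p.1 t, p.2 t)].

Definition tpow (C : numClosedFieldType) (I J : finType) (k : nat)
  (S : vec C I J -> Prop) : vec C {ffun 'I_k -> I} {ffun 'I_k -> J} -> Prop :=
  span (fun w => exists vs : 'I_k -> vec C I J,
          (forall t, S (vs t)) /\ w = tens vs).

Arguments tpow {C I J} k S.

Definition strongly_PPT_unextendible (C : numClosedFieldType) (I J : finType)
  (S : vec C I J -> Prop) : Prop :=
  forall k : nat, (0 < k)%N -> ~ PPT_extendible (tpow k S).

From HB Require Import structures.
From mathcomp Require Import all_boot all_order all_algebra.
From mathcomp Require Import ring.
Import Order.TTheory GRing.Theory Num.Theory.
Set Implicit Arguments. Unset Strict Implicit. Unset Printing Implicit Defensive.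
Local Open Scope ring_scope.
Local Open Scope sesquilinear_scope.

(* If E != 0 were PPT with support orthogonal to S^(x)k, then, since the
   columns of sigma^(x)k lie in S^(x)k, the Hilbert-Schmidt product
   <sigma^(x)k, E> vanishes.  Partial transposition preserves this product
   and commutes with tensor powers, so <(sigma^T_B)^(x)k, E^T_B> = 0 too.
   Writing sigma^T_B = L L^* with L invertible and E^T_B = W W^*, this
   product is the squared norm of (L^(x)k)^* W, hence W = 0 and E = 0. *)

Section OperatorAlgebra.
Variables (C : numClosedFieldType) (X : finType).
Local Notation sq := {ffun X * X -> C}.

Definition opmul (A B : sq) : sq := [ffun p => \sum_q A (p.1, q) * B (q, p.2)].
Definition opadj (A : sq) : sq := [ffun p => (A (p.2, p.1))^*].
Definition op1 : sq := [ffun p => (p.1 == p.2)%:R].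
Definition hsdot (A B : sq) : C := \sum_p (A p)^* * B p.

Lemma opmulA : associative opmul.
Proof.
move=> A B D; apply/ffunP => -[x z]; rewrite !ffunE /=.
under eq_bigr do rewrite ffunE mulr_sumr.
under [RHS]eq_bigr do rewrite ffunE mulr_suml.
rewrite exchange_big; apply: eq_bigr => r _; apply: eq_bigr => q _.
by rewrite mulrA.
Qed.

Lemma opmul1l : left_id op1 opmul.
Proof.
move=> A; apply/ffunP => -[x z]; rewrite ffunE (bigD1 x) //= ffunE eqxx mul1r.
by rewrite big1 ?addr0 // => q /negbTE; rewrite ffunE /= eq_sym => ->; rewrite mul0r.
Qed.

Lemma opmul0l (A : sq) : opmul 0 A = 0.
Proof. by apply/ffunP => p; rewrite !ffunE big1 // => q _; rewrite ffunE mul0r. Qed.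

Lemma opmulr0 (A : sq) : opmul A 0 = 0.
Proof. by apply/ffunP => p; rewrite !ffunE big1 // => q _; rewrite ffunE mulr0. Qed.

Lemma hsdotE (A B : sq) : hsdot A B = \sum_x \sum_y (A (x, y))^* * B (x, y).
Proof. by rewrite pair_bigA; apply: eq_bigr => -[]. Qed.

Lemma hsdot_gram (L W : sq) :
  hsdot (opmul L (opadj L)) (opmul W (opadj W)) =
  hsdot (opmul (opadj L) W) (opmul (opadj L) W).
Proof.
pose c a b z := (L (z, a))^* * W (z, b).
transitivity (\sum_a \sum_b \sum_z \sum_x c a b z * (c a b x)^*); last first.
  rewrite hsdotE; apply: eq_bigr => a _; apply: eq_bigr => b _.
  rewrite !ffunE /= mulrC rmorph_sum big_distrlr /=.
  by apply: eq_bigr => z _; apply: eq_bigr => x _; rewrite !ffunE.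
rewrite hsdotE.
under eq_bigr => z _ do under eq_bigr => x _ do
  rewrite !ffunE /= rmorph_sum big_distrlr /=.
under eq_bigr do rewrite exchange_big.
rewrite exchange_big; apply: eq_bigr => a _.
under eq_bigr do rewrite exchange_big.
rewrite exchange_big; apply: eq_bigr => b _.
apply: eq_bigr => z _; apply: eq_bigr => x _.
by rewrite !ffunE /= /c !rmorphM /= !conjCK; ring.
Qed.

Lemma hsdot_self_eq0 (M : sq) : hsdot M M = 0 -> M = 0.
Proof.
move=> /psumr_eq0P M0; apply/ffunP => p; rewrite ffunE.
have /eqP : (M p)^* * M p = 0 by apply: M0 => // q _; rewrite mulrC mul_conjC_ge0.
by rewrite mulrC mul_conjC_eq0 => /eqP.
Qed.

Lemma gram_eq0_of_hsdot (L K W : sq) :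
  opmul K (opadj L) = op1 ->
  hsdot (opmul L (opadj L)) (opmul W (opadj W)) = 0 -> opmul W (opadj W) = 0.
Proof.
move=> KL; rewrite hsdot_gram => /hsdot_self_eq0 LW0.
suff -> : W = 0 by rewrite opmul0l.
by rewrite -[W]opmul1l -KL -opmulA LW0 opmulr0.
Qed.

Lemma big_enum_rank (F : 'I_#|X| -> C) : \sum_i F i = \sum_x F (enum_rank x).
Proof. by rewrite (reindex (@enum_rank X)) //; apply/onW_bij/enum_rank_bij. Qed.

Definition mx_of_op (A : sq) : 'M[C]_#|X| := \matrix_(i, j) A (enum_val i, enum_val j).
Definition op_of_mx (M : 'M[C]_#|X|) : sq :=
  [ffun p => M (enum_rank p.1) (enum_rank p.2)].

Lemma mx_of_opK : cancel mx_of_op op_of_mx.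
Proof. by move=> A; apply/ffunP => -[x y]; rewrite ffunE mxE !enum_rankK. Qed.

Lemma op_of_mxM (M N : 'M[C]_#|X|) :
  op_of_mx (M *m N) = opmul (op_of_mx M) (op_of_mx N).
Proof.
apply/ffunP => -[x z]; rewrite !ffunE mxE big_enum_rank.
by apply: eq_bigr => q _; rewrite !ffunE.
Qed.

Lemma op_of_mx_adj (M : 'M[C]_#|X|) : op_of_mx (M^t*) = opadj (op_of_mx M).
Proof. by apply/ffunP => -[x y]; rewrite !ffunE !mxE. Qed.

Lemma op_of_mx1 : op_of_mx 1%:M = op1.
Proof. by apply/ffunP => -[x y]; rewrite !ffunE mxE (inj_eq enum_rank_inj). Qed.

End OperatorAlgebra.

Arguments op1 {C X}.

Section PsdMatrix.
Variables (C : numClosedFieldType) (n : nat).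

Definition psdmx (A : 'M[C]_n) := forall u : 'cV_n, 0 <= (u^t* *m A *m u) 0 0.
Definition pdmx (A : 'M[C]_n) := forall u : 'cV_n, u != 0 -> 0 < (u^t* *m A *m u) 0 0.

Lemma psdmx_factor (A : 'M[C]_n) : A \is hermsymmx -> psdmx A ->
  exists2 W : 'M_n, A = W *m W^t* & (pdmx A -> W \in unitmx).
Proof.
move=> Aherm Apsd; have /orthomx_spectralP := hermitian_normalmx Aherm.
set P := spectralmx A; set d := spectral_diag A.
have Punitary : P \is unitarymx by apply: spectral_unitarymx.
rewrite invmx_unitary // => Aeq.
have PPt : P *m P^t* = 1%:M by apply/unitarymxP.
have d_quad l : d 0 l = (((row l P)^t*)^t* *m A *m (row l P)^t*) 0 0.
  have /matrixP/(_ l l) : P *m A *m P^t* = diag_mx d.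
    by rewrite Aeq !mulmxA PPt mul1mx -mulmxA PPt mulmx1.
  rewrite [diag_mx d l l]mxE eqxx mulr1n => <-.
  rewrite trmxCK !mxE; apply: eq_bigr => j _; rewrite !mxE; congr (_ * _).
  by apply: eq_bigr => i _; rewrite !mxE.
have d_ge0 l : 0 <= d 0 l by rewrite d_quad.
pose s := \row_l sqrtC (d 0 l).
have s_conj : s ^ Num.conj = s.
  by apply/matrixP => i j; rewrite !mxE geC0_conj ?sqrtC_ge0.
have ss : diag_mx s *m diag_mx s = diag_mx d.
  by apply/matrixP => i j; rewrite mul_diag_mx !mxE mulrnAr -expr2 sqrtCK.
exists (P^t* *m diag_mx s).
  rewrite Aeq !trmx_mul !map_mxM trmxCK tr_diag_mx map_diag_mx s_conj.
  by rewrite !mulmxA -(mulmxA _ (diag_mx s)) ss.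
move=> Apd; rewrite unitmx_mul unitarymx_unit ?trmxC_unitary //=.
rewrite unitmxE det_diag unitfE prodf_seq_neq0; apply/allP => l _ /=.
rewrite mxE sqrtC_eq0 lt0r_neq0 // d_quad; apply: Apd.
apply: contraNneq (oner_neq0 C) => /(congr1 (fun v => v^t* *m P^t*)).
rewrite trmxCK -row_mul PPt row1 trmx0 map_mx0 mul0mx => /matrixP/(_ 0 l).
by rewrite !mxE !eqxx => /eqP.
Qed.

End PsdMatrix.

Section PsdFactor.
Variables (C : numClosedFieldType) (I J : finType).
Implicit Types E : op C I J.

Lemma quad_form_pair E x y (a b : C) :
  let u : vec C I J := [ffun z => a * (z == x)%:R + b * (z == y)%:R] in
  inner u (apply E u) = a^* * a * E (x, x) + a^* * b * E (x, y)
                        + b^* * a * E (y, x) + b^* * b * E (y, y).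
Proof.
have pick_r (F : I * J -> C) (c : C) z : \sum_w F w * (c * (w == z)%:R) = F z * c.
  by rewrite (bigD1 z) //= eqxx mulr1 big1 ?addr0 // => w /negbTE ->; rewrite !mulr0.
have pick_l (F : I * J -> C) (c : C) z : \sum_w (c * (w == z)%:R)^* * F w = c^* * F z.
  rewrite (bigD1 z) //= eqxx mulr1 big1 ?addr0 // => w /negbTE ->.
  by rewrite mulr0 conjC0 mul0r.
move=> u; have -> : apply E u = [ffun z => E (z, x) * a + E (z, y) * b].
  apply/ffunP => z; rewrite !ffunE; under eq_bigr do rewrite ffunE mulrDr.
  by rewrite big_split /= !pick_r.
rewrite /inner; under eq_bigr do rewrite ffunE rmorphD mulrDl.
by rewrite big_split /= !pick_l !ffunE; ring.
Qed.

Lemma psd_herm E : psd E -> forall x y, E (y, x) = (E (x, y))^*.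
Proof.
move=> Epsd x y.
pose q a b := a^* * a * E (x, x) + a^* * b * E (x, y)
              + b^* * a * E (y, x) + b^* * b * E (y, y).
have q_real a b : (q a b)^* = q a b by rewrite /q -quad_form_pair; apply/geC0_conj/Epsd.
have sum_real : (E (x, y))^* + (E (y, x))^* = E (x, y) + E (y, x).
  rewrite -rmorphD; have -> : E (x, y) + E (y, x) = q 1 1 - q 1 0 - q 0 1.
    by rewrite /q conjC1 conjC0; ring.
  by rewrite !rmorphB /= !q_real.
have diff_real : (E (y, x))^* - (E (x, y))^* = E (x, y) - E (y, x).
  have i_diff : 'i * (E (x, y) - E (y, x)) = q 1 'i - q 1 0 - q 0 1.
    have ii : - 'i * 'i = 1 :> C by rewrite mulNr -expr2 sqrCi opprK.
    by rewrite /q conjC1 conjC0 conjCi ii; ring.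
  have := congr1 (fun z => z^*) i_diff; rewrite !rmorphB /= !q_real -i_diff.
  rewrite rmorphM /= conjCi mulNr -mulrN => /(mulfI (neq0Ci C)) <-.
  by rewrite rmorphB opprB.
have : ((E (x, y))^* - E (y, x)) * 2 =
       ((E (x, y))^* + (E (y, x))^* - (E (x, y) + E (y, x)))
       - ((E (y, x))^* - (E (x, y))^* - (E (x, y) - E (y, x))) by ring.
rewrite sum_real diff_real !subrr => /eqP.
by rewrite mulf_eq0 pnatr_eq0 orbF subr_eq0 => /eqP.
Qed.

Lemma pd_psd E : pd E -> psd E.
Proof.
move=> Epd v; have [->|/Epd/ltW //] := eqVneq v 0.
by rewrite /inner big1 // => x _; rewrite ffunE conjC0 mul0r.
Qed.

Lemma mx_of_op_herm E : psd E -> mx_of_op E \is hermsymmx.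
Proof.
move=> Epsd; apply/is_hermitianmxP; rewrite expr0 scale1r.
by apply/matrixP => i j; rewrite !mxE (psd_herm Epsd).
Qed.

Lemma mx_of_op_quad E (u : 'cV[C]_#|{: I * J}|) :
  let v : vec C I J := [ffun x => u (enum_rank x) 0] in
  (u^t* *m mx_of_op E *m u) 0 0 = inner v (apply E v).
Proof.
rewrite -mulmxA mxE big_enum_rank; apply: eq_bigr => x _.
rewrite !mxE !ffunE big_enum_rank; congr (_ * _).
by apply: eq_bigr => y _; rewrite !mxE !enum_rankK ffunE.
Qed.

Lemma mx_of_op_psd E : psd E -> psdmx (mx_of_op E).
Proof. by move=> Epsd u; rewrite mx_of_op_quad. Qed.

Lemma mx_of_op_pd E : pd E -> pdmx (mx_of_op E).
Proof.
move=> Epd u u_neq0; rewrite mx_of_op_quad; apply: Epd.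
apply: contraNneq u_neq0 => /ffunP v0; apply/eqP/matrixP => i j.
by move: (v0 (enum_val i)); rewrite !ffunE enum_valK ord1 mxE.
Qed.

Lemma psd_factor E : psd E -> exists W, E = opmul W (opadj W).
Proof.
move=> Epsd; have [W EW _] := psdmx_factor (mx_of_op_herm Epsd) (mx_of_op_psd Epsd).
by exists (op_of_mx W); rewrite -op_of_mx_adj -op_of_mxM -EW mx_of_opK.
Qed.

Lemma pd_factor E : pd E ->
  exists W K, E = opmul W (opadj W) /\ opmul K (opadj W) = op1.
Proof.
move=> Epd; have Epsd := pd_psd Epd.
have [W EW Wunit] := psdmx_factor (mx_of_op_herm Epsd) (mx_of_op_psd Epsd).
exists (op_of_mx W), (op_of_mx (invmx (W^t*))).
rewrite -op_of_mx_adj -!op_of_mxM -EW mx_of_opK mulVmx ?op_of_mx1 //.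
by rewrite map_unitmx unitmx_tr; apply/Wunit/mx_of_op_pd.
Qed.

End PsdFactor.

Section HilbertSchmidt.
Variables (C : numClosedFieldType) (I J : finType).
Implicit Types A B E : op C I J.

Definition ket (x : I * J) : vec C I J := [ffun y => (y == x)%:R].

Lemma apply_ket E x : apply E (ket x) = [ffun z => E (z, x)].
Proof.
apply/ffunP => z; rewrite !ffunE (bigD1 x) //= ffunE eqxx mulr1.
by rewrite big1 ?addr0 // => y /negbTE; rewrite ffunE => ->; rewrite mulr0.
Qed.

Lemma hsdot_cols A B : hsdot A B = \sum_x inner (apply A (ket x)) (apply B (ket x)).
Proof.
rewrite hsdotE exchange_big; apply: eq_bigr => x _.
by rewrite /inner !apply_ket; apply: eq_bigr => z _; rewrite !ffunE.
Qed.

Lemma ptransK : involutive (@ptrans C I J).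
Proof. by move=> E; apply/ffunP => -[[i j] [k l]]; rewrite !ffunE. Qed.

Lemma hsdot_ptrans A B : hsdot (ptrans A) (ptrans B) = hsdot A B.
Proof.
pose sw (p : (I * J) * (I * J)) := ((p.1.1, p.2.2), (p.2.1, p.1.2)).
have swK : involutive sw by case=> [[i j] [k l]].
rewrite [RHS](reindex_inj (inv_inj swK)) /=.
by apply: eq_bigr => -[[i j] [k l]] _; rewrite !ffunE.
Qed.

End HilbertSchmidt.

Arguments ket {C I J} x.

Section TensorPower.
Variables (C : numClosedFieldType) (I J : finType) (k : nat).
Implicit Types A B M : op C I J.
Local Notation idx := ({ffun 'I_k -> I} * {ffun 'I_k -> J})%type.
Local Notation opk := (op C {ffun 'I_k -> I} {ffun 'I_k -> J}).

Definition optens (M : op C I J) : opk :=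
  [ffun p : idx * idx => \prod_(t < k) M ((p.1.1 t, p.1.2 t), (p.2.1 t, p.2.2 t))].

Lemma bigA_distr_big_pair (F : 'I_k -> I * J -> C) :
  \sum_(y : idx) \prod_t F t (y.1 t, y.2 t) = \prod_t \sum_q F t q.
Proof.
pose G (a : {ffun 'I_k -> I}) (b : {ffun 'I_k -> J}) := \prod_t F t (a t, b t).
rewrite -(pair_bigA _ G) /=.
rewrite (eq_bigr (fun t => \sum_i \sum_j F t (i, j))); last first.
  by move=> t _; rewrite pair_bigA; apply: eq_bigr => -[].
rewrite bigA_distr_bigA; apply: eq_bigr => a _.
by rewrite bigA_distr_bigA.
Qed.

Lemma optensM A B : optens (opmul A B) = opmul (optens A) (optens B).
Proof.
apply/ffunP => -[x z]; rewrite !ffunE /=.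
under [RHS]eq_bigr do rewrite !ffunE /= -big_split /=.
pose F t q := A ((x.1 t, x.2 t), q) * B (q, (z.1 t, z.2 t)).
by rewrite (bigA_distr_big_pair F); apply: eq_bigr => t _; rewrite ffunE.
Qed.

Lemma optens1 : optens op1 = op1.
Proof.
apply/ffunP => -[x z]; rewrite !ffunE /=.
have [<-|neq_xz] := eqVneq x z; first by apply: big1 => t _; rewrite ffunE /= eqxx.
have [t neq_t] : exists t, (x.1 t, x.2 t) != (z.1 t, z.2 t).
  apply/existsP; apply: contraR neq_xz; rewrite negb_exists => /forallP eq_xz.
  case: x z eq_xz => [a b] [c d] /= eq_xz.
  by apply/eqP; congr pair; apply/ffunP => t; have /negPn/eqP[] := eq_xz t.
by rewrite (bigD1 t) //= ffunE /= (negbTE neq_t) mul0r.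
Qed.

Lemma optens_adj M : optens (opadj M) = opadj (optens M).
Proof.
by apply/ffunP => p; rewrite !ffunE rmorph_prod; apply: eq_bigr => t _; rewrite ffunE.
Qed.

Lemma optens_ptrans M : optens (ptrans M) = ptrans (optens M).
Proof.
by apply/ffunP => -[[a b] [c d]]; rewrite !ffunE; apply: eq_bigr => t _; rewrite ffunE.
Qed.

Lemma optens_col M x :
  apply (optens M) (ket x) = tens (fun t => apply M (ket (x.1 t, x.2 t))).
Proof.
apply/ffunP => z; rewrite apply_ket !ffunE; apply: eq_bigr => t _.
by rewrite apply_ket ffunE.
Qed.

Lemma tpow_tens (S : vec C I J -> Prop) (vs : 'I_k -> vec C I J) :
  (forall t, S (vs t)) -> tpow k S (tens vs).
Proof.
move=> Svs; exists [:: (1, tens vs)]; split.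
  by move=> p; rewrite inE => /eqP -> /=; exists vs.
by rewrite big_seq1; apply/ffunP => z; rewrite !ffunE /= mul1r.
Qed.

Lemma hsdot_optens_orth (S : vec C I J -> Prop) (sigma : op C I J) (E : opk) :
  (forall w, supp sigma w -> S w) -> (forall w, supp E w -> orth (tpow k S) w) ->
  hsdot (optens sigma) E = 0.
Proof.
move=> supp_sigma orthE; rewrite hsdot_cols; apply: big1 => x _.
apply: orthE; first by exists (ket x).
rewrite optens_col; apply: tpow_tens => t.
by apply: supp_sigma; exists (ket (x.1 t, x.2 t)).
Qed.

End TensorPower.

Theorem lemma2 (C : numClosedFieldType) (I J : finType)
  (S : vec C I J -> Prop) (hS : is_subspace S)
  (sigma : op C I J) (hsigma : PPT_definite sigma)
  (hsupp : forall w, supp sigma w -> S w) :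
  strongly_PPT_unextendible S.
Proof.
move=> k _ [E [E_neq0 [[_ Et_psd] orthE]]].
have [L [K [sigmat_gram KL]]] := pd_factor hsigma.2.
have [W Et_gram] := psd_factor Et_psd.
have Et0 : ptrans E = 0.
  rewrite Et_gram; apply: (@gram_eq0_of_hsdot _ _ (optens k L) (optens k K)).
    by rewrite -optens_adj -optensM KL optens1.
  rewrite -optens_adj -optensM -sigmat_gram -Et_gram optens_ptrans hsdot_ptrans.
  exact: hsdot_optens_orth hsupp orthE.
move: E_neq0; rewrite -[E]ptransK Et0 => /eqP; apply.
by apply/ffunP => p; rewrite !ffunE.
Qed.
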